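(* Let $\varphi$ be a rational function of degree $n$ which is univalent on a neighborhood of $\overline{\mathbb D}$, let $\Omega:=\varphi(\mathbb D)$ and $\Gamma:=\partial\Omega=\varphi(\partial\mathbb D)$. For $t\in\widehat{\mathbb C}$ let $\{R(t)\}$ denote the collection $\{\varphi(1/\bar\zeta):\zeta\in\widehat{\mathbb C},\ \varphi(\zeta)=t\}$ (with $1/\bar 0=\infty$, $1/\bar\infty=0$), and let $B$ be the finite set of $t\in\widehat{\mathbb C}$ for which $\varphi(\zeta)=t$ has fewer than $n$ distinct solutions. Then: (i) if $t\in\widehat{\mathbb C}\setminus(\overline\Omega\cup B)$, then $\{R(t)\}\subset\Omega$; (ii) if $t\in\Gamma\setminus B$, then exactly one point of $\{R(t)\}$, namely $t$ itself, lies on $\Gamma$, and the remaining $n-1$ points lie in $\Omega$.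
   Context: $\mathbb D$ is the open unit disk. The degree of $\varphi=p/q$ ($p,q$ polynomials without common zeros) is $\max(\deg p,\deg q)$. $\{R(t)\}$ is the set of values at $t$ of the multivalued anticonformal reflection $R=\overline S$ of $\Gamma$, where the Schwarz function $S$ of $\Gamma$ satisfies $S(\varphi(\zeta))=\overline{\varphi(1/\bar\zeta)}$; in particular $R(\zeta)=\zeta$ on $\Gamma$ for the principal branch. *)

From HB Require Import structures.
From mathcomp Require Import all_boot all_order all_algebra.
From mathcomp Require Import all_classical all_reals all_analysis.
From mathcomp Require Export complex.
Export numFieldNormedType.Exports.
Set Implicit Arguments. Unset Strict Implicit. Unset Printing Implicit Defensive.
Import Order.TTheory GRing.Theory Num.Theory.
Local Open Scope ring_scope.
Local Open Scope classical_set_scope.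

(* The complex numbers, as a numClosedFieldType (so that the generic
   normed/topological structure of mathcomp-analysis applies). *)
Definition Cplx (R : rcfType) : numClosedFieldType := R[i].

(* The Riemann sphere: [Some z] is the finite point z, [None] is infinity. *)
Definition sphere (R : rcfType) := option (Cplx R).

(* Value of the rational function p/q at a point of the sphere
   (p, q assumed coprime and q != 0). *)
Definition rat_eval (R : rcfType) (p q : {poly (Cplx R)}) (z : sphere R) : sphere R :=
  match z with
  | Some z => if q.[z] == 0 then None else Some (p.[z] / q.[z])
  | None => if (size q < size p)%N then None
            else if size p == size q then Some (lead_coef p / lead_coef q)
            else Some 0
  end.

Definition rat_deg (R : rcfType) (p q : {poly (Cplx R)}) : nat :=
  (maxn (size p) (size q)).-1.

Definition sphere_refl (R : rcfType) (z : sphere R) : sphere R :=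
  match z with
  | Some z => if z == 0 then None else Some ((z^*)^-1)
  | None => Some 0
  end.

(* t is in the exceptional set B: phi(zeta) = t has fewer than n distinct
   solutions zeta in the sphere, i.e. there are no n distinct solutions. *)
Definition in_B (R : rcfType) (p q : {poly (Cplx R)}) (t : sphere R) : Prop :=
  ~ exists f : 'I_(rat_deg p q) -> sphere R,
      injective f /\ forall i, rat_eval p q (f i) = t.

Definition univalent_near_closed_disk (R : realType) (p q : {poly (Cplx R)}) : Prop :=
  exists U : set (Cplx R), open U /\ [set z | `|z| <= 1] `<=` U /\
    (forall z, U z -> q.[z] != 0) /\
    {in U &, injective (fun z => p.[z] / q.[z])}.

Definition Omega (R : realType) (p q : {poly (Cplx R)}) : set (Cplx R) :=
  [set p.[z] / q.[z] | z in [set z : (Cplx R) | `|z| < 1]].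

Definition Gamma (R : realType) (p q : {poly (Cplx R)}) : set (Cplx R) :=
  [set p.[z] / q.[z] | z in [set z : (Cplx R) | `|z| = 1]].

From mathcomp Require Import all_boot all_order all_algebra.
From mathcomp Require Import all_classical all_reals all_analysis.
From mathcomp Require Import complex.
Import Order.TTheory GRing.Theory Num.Theory numFieldNormedType.Exports.
Local Open Scope ring_scope.
Local Open Scope classical_set_scope.

(* A solution zeta of phi(zeta) = t in the closed disk gives
   t = phi(zeta) in phi(closed disk), which lies in the closure of Omega.  So
   for t outside that closure every solution lies outside the closed disk, and
   its reflection 1/conj(zeta) lies in D, where phi takes values in Omega.  For
   t = phi(z0) on Gamma, injectivity of phi on the closed disk makes z0 (its own
   reflection) the only solution there, and the other solutions reflect into
   D; injectivity also makes Omega and Gamma disjoint. *)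

Lemma continuous_horner_num (K : numFieldType) (p : {poly K}) :
  continuous (horner p).
Proof.
move=> x; elim/poly_ind: p => [|p c IH].
  have -> : horner (0 : {poly K}) = cst 0 by apply/funext => y; rewrite horner0.
  by apply: cvg_cst; exact: nbhs_filter.
have -> : horner (p * 'X + c%:P) = (fun y => p.[y] * y + c).
  by apply/funext => y; rewrite !hornerE.
apply: cvgD; first exact: nbhs_filter.
  by apply: cvgM; [exact: nbhs_filter | exact: IH | exact: cvg_id].
by apply: cvg_cst; exact: nbhs_filter.
Qed.

Lemma horner_div_cvg (K : numFieldType) (p q : {poly K}) (x : K) :
  q.[x] != 0 -> (fun y => p.[y] / q.[y]) y @[y --> x] --> p.[x] / q.[x].
Proof.
move=> qx0; apply: cvgM; first exact: nbhs_filter.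
  exact: continuous_horner_num.
by apply: cvgV => //; [exact: nbhs_filter | exact: continuous_horner_num].
Qed.

Lemma closure_image (T U : topologicalType) (f : T -> U) (A : set T) (x : T) :
  f @ x --> f x -> closure A x -> closure (f @` A) (f x).
Proof.
move=> fx Ax B /fx /Ax [a [Aa Bfa]].
by exists (f a); split; first exists a.
Qed.

Lemma closed_disk_sub_closure (K : numFieldType) :
  [set z : K | `|z| <= 1] `<=` closure [set z | `|z| < 1].
Proof.
move=> z /= z1 B /nbhs_ballP [e /= e0 zeB].
pose r := e / (1 + e).
have e1 : 0 < 1 + e by rewrite addr_gt0.
have r0 : 0 < r by rewrite divr_gt0.
have r1 : r < 1 by rewrite ltr_pdivrMr // mul1r ltrDr.
have re : r < e by rewrite ltr_pdivrMr // ltr_pMr // ltrDl.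
exists ((1 - r) * z); split.
  rewrite /= normrM ger0_norm ?subr_ge0 ?ltW //.
  apply: (le_lt_trans (y := 1 - r)); first by rewrite ler_piMr // subr_ge0 ltW.
  by rewrite ltrBlDr ltrDl.
apply: zeB; rewrite -ball_normE /ball_ /= mulrBl mul1r opprB addrC subrK.
rewrite normrM gtr0_norm //.
by apply: le_lt_trans re; rewrite ler_piMr // ltW.
Qed.

Definition outside_closed_disk {R : rcfType} (zeta : sphere R) : Prop :=
  if zeta is Some z then 1 < `|z| else True.

Lemma closed_diskVoutside {R : rcfType} (zeta : sphere R) :
  (exists2 z, zeta = Some z & `|z| <= 1) \/ outside_closed_disk zeta.
Proof.
case: zeta => [z|]; last by right.
have [z1|z1] := real_leP (normr_real z) (@real1 _); first by left; exists z.
by right.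
Qed.

Lemma sphere_refl_outside {R : rcfType} (zeta : sphere R) :
  outside_closed_disk zeta ->
  exists2 u : Cplx R, sphere_refl zeta = Some u & `|u| < 1.
Proof.
case: zeta => [z /= z1|_]; last by exists 0; rewrite ?normr0.
have z0 : z != 0 by apply: contraTneq z1 => ->; rewrite normr0 ltr10.
exists ((z^*)^-1); first by rewrite (negbTE z0).
by rewrite normfV norm_conjC invf_lt1 // (lt_trans ltr01 z1).
Qed.

Lemma sphere_refl_unit {R : rcfType} (z : Cplx R) :
  `|z| = 1 -> sphere_refl (Some z) = Some z.
Proof.
move=> z1; have z0 : z != 0 by rewrite -normr_eq0 z1 oner_eq0.
have zVz : z^* * z = 1 by rewrite -normCKC z1 expr1n.
by rewrite /= (negbTE z0) (mulr1_eq zVz).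
Qed.

Section Univalent.
Local Set Implicit Arguments.
Local Unset Strict Implicit.
Variables (R : realType) (p q : {poly (Cplx R)}) (U : set (Cplx R)).
Hypotheses (disk_sub_U : [set z | `|z| <= 1] `<=` U)
  (q_neq0_U : forall z, U z -> q.[z] != 0)
  (phi_inj_U : {in U &, injective (fun z => p.[z] / q.[z])}).

Local Notation phi z := (p.[z] / q.[z]).

Lemma rat_eval_closed_disk (z : Cplx R) :
  `|z| <= 1 -> rat_eval p q (Some z) = Some (phi z).
Proof. by move=> z1; rewrite /= (negbTE (q_neq0_U (disk_sub_U z1))). Qed.

Lemma phi_inj_closed_disk (z w : Cplx R) :
  `|z| <= 1 -> `|w| <= 1 -> phi z = phi w -> z = w.
Proof. by move=> z1 w1; apply: phi_inj_U; rewrite inE; apply: disk_sub_U. Qed.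

Lemma closure_Omega_closed_disk (z : Cplx R) :
  `|z| <= 1 -> closure (Omega p q) (phi z).
Proof.
move=> z1; apply: closure_image; last exact: closed_disk_sub_closure.
exact/horner_div_cvg/q_neq0_U/disk_sub_U.
Qed.

Lemma Omega_not_Gamma (w : Cplx R) : Omega p q w -> ~ Gamma p q w.
Proof.
rewrite /Omega /Gamma => -[u /= u1 <-] [v /= v1 phi_vu].
have vu : v = u by apply: phi_inj_closed_disk phi_vu; [rewrite v1 | exact: ltW].
by move: u1; rewrite -vu v1 ltxx.
Qed.

Lemma rat_eval_refl_outside (zeta : sphere R) : outside_closed_disk zeta ->
  exists w, [/\ rat_eval p q (sphere_refl zeta) = Some w,
                Omega p q w & ~ Gamma p q w].
Proof.
move=> /sphere_refl_outside [u -> u1].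
have Omega_u : Omega p q (phi u) by exists u.
exists (phi u); split; [exact/rat_eval_closed_disk/ltW | by [] |].
exact: Omega_not_Gamma.
Qed.

Lemma outside_of_not_closure_Omega (zeta : sphere R) :
  ~ (exists t, rat_eval p q zeta = Some t /\ closure (Omega p q) t) ->
  outside_closed_disk zeta.
Proof.
case: (closed_diskVoutside zeta) => // -[z -> z1] [].
exists (phi z); rewrite rat_eval_closed_disk //.
by split; last exact: closure_Omega_closed_disk.
Qed.

Lemma outside_of_other_preimage (z0 : Cplx R) (zeta : sphere R) :
  `|z0| = 1 -> rat_eval p q zeta = Some (phi z0) -> zeta <> Some z0 ->
  outside_closed_disk zeta.
Proof.
move=> z01; case: (closed_diskVoutside zeta) => // -[z -> z1].
rewrite rat_eval_closed_disk // => -[/phi_inj_closed_disk -> //].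
by rewrite z01.
Qed.

End Univalent.

Theorem lemma3p12 (R : realType) (p q : {poly (Cplx R)}) :
  q != 0 -> coprimep p q ->
  univalent_near_closed_disk p q ->
  (* (i) *)
  (forall t : sphere R,
      ~ (exists t', t = Some t' /\ closure (Omega p q) t') ->
      ~ in_B p q t ->
      forall zeta : sphere R, rat_eval p q zeta = t ->
        exists w, rat_eval p q (sphere_refl zeta) = Some w /\ Omega p q w)
  /\
  (* (ii) *)
  (forall t : Cplx R, Gamma p q t -> ~ in_B p q (Some t) ->
      exists zeta0 : sphere R,
        [/\ rat_eval p q zeta0 = Some t,
            rat_eval p q (sphere_refl zeta0) = Some t &
            forall zeta : sphere R, rat_eval p q zeta = Some t -> zeta <> zeta0 ->
              exists w, [/\ rat_eval p q (sphere_refl zeta) = Some w,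
                            Omega p q w & ~ Gamma p q w]]).
Proof.
move=> _ _ [U [_ [sU [qU injU]]]]; split.
  move=> t + _ zeta ezeta; rewrite -ezeta.
  move=> /(outside_of_not_closure_Omega sU qU).
  move=> /(rat_eval_refl_outside sU qU injU).
  by case=> w [-> Omega_w _]; exists w.
move=> t [z0 /= z01 <-] _.
have z0_disk : `|z0| <= 1 by rewrite z01.
have ez0 := rat_eval_closed_disk p sU qU z0_disk.
exists (Some z0); split => //; first by rewrite sphere_refl_unit.
move=> zeta ezeta neq; apply: (rat_eval_refl_outside sU qU injU).
exact: (outside_of_other_preimage sU qU injU z01 ezeta).
Qed.
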